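(* Let $n\ge r\ge1$, let $\mathcal{O}\subset\mathbb{R}^{n\times r}$ be an open set containing ${\rm St}(n,r)$, and let $f:\mathcal{O}\to\mathbb{R}$ be continuously differentiable; let $L_f$ be a Lipschitz constant of $f$ on ${\rm St}(n,r)$. Consider problem (P): $\min_{X\in\mathcal{S}_{+}^{n,r}} f(X)$ with optimal value $f^*$. Suppose that, in the case $n>r>1$, every global minimizer of (P) has no zero rows. Then: 1. If $n=r$ or $n>r=1$, let $\kappa'>0$ be a constant such that ${\rm dist}(Z,\mathcal{S}_{+}^{n,r})\le\kappa'{\rm dist}(Z,\mathbb{R}_{+}^{n\times r})$ for all $Z\in{\rm St}(n,r)$ (such a constant exists). Then $f(X)-f^*+\kappa' L_f\vartheta(X)\ge0$ for all $X\in{\rm St}(n,r)$. 2. If $n>r>1$, then for every global minimizer $X^*$ of (P) there exists $\delta>0$ such that for all $\epsilon\ge0$ and all $X$ with $\|X-X^*\|_F\le\delta$ and $X\in\mathcal{F}_\epsilon:=\{X\in{\rm St}(n,r):\vartheta(X)=\epsilon\}$, one has $f(X)-f^*+\kappa L_f\vartheta(X)\ge0$, where $\kappa:=\frac{2.1\sqrt{r}[1+3r(n-r)]}{X^*_{i^*j^*}}$ with $X^*_{i^*j^*}$ the smallest nonzero entry of $X^*$. Consequently, there exists $\overline{\rho}>0$ such that for every $\rho\ge\overline{\rho}$ the penalty problem $\min_{X\in{\rm St}(n,r)}\{f(X)+\rho\vartheta(X)\}$ has the same set of global optimal solutions as (P).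
   Context: ${\rm St}(n,r):=\{X\in\mathbb{R}^{n\times r}: X^\top X=I_r\}$, $\mathbb{R}_{+}^{n\times r}$ is the cone of entrywise nonnegative matrices, $\mathcal{S}_{+}^{n,r}:=\mathbb{R}_{+}^{n\times r}\cap{\rm St}(n,r)$, ${\rm dist}$ is the Frobenius-norm distance. $\vartheta(X):=\langle E,\max(0,-X)\rangle=\sum_{i,j}\max(0,-X_{ij})$ is the elementwise $\ell_1$-norm distance from $X$ to $\mathbb{R}_{+}^{n\times r}$ ($E$ the all-ones matrix, $\max$ entrywise). *)

From HB Require Import structures.
From mathcomp Require Import all_boot all_order all_algebra.
From mathcomp Require Import all_classical all_reals all_analysis.
Set Implicit Arguments. Unset Strict Implicit. Unset Printing Implicit Defensive.
Import Order.TTheory GRing.Theory Num.Theory.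
Import numFieldNormedType.Exports.
Local Open Scope classical_set_scope.
Local Open Scope ring_scope.

Section Defs.
Variable R : realType.
Variables n r : nat.

Definition frob (X : 'M[R]_(n, r)) : R :=
  Num.sqrt (\sum_(i < n) \sum_(j < r) X i j ^+ 2).

Definition Stiefel : set 'M[R]_(n, r) := [set X | X^T *m X = 1%:M].

Definition Rplus : set 'M[R]_(n, r) := [set X | forall i j, 0 <= X i j].

Definition Splus : set 'M[R]_(n, r) := Rplus `&` Stiefel.

Definition dist (Z : 'M[R]_(n, r)) (S : set 'M[R]_(n, r)) : R :=
  inf [set frob (Z - Y) | Y in S].

Definition vartheta (X : 'M[R]_(n, r)) : R :=
  \sum_(i < n) \sum_(j < r) Num.max 0 (- X i j).

Definition global_min (g : 'M[R]_(n, r) -> R) (S : set 'M[R]_(n, r))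
  (X : 'M[R]_(n, r)) : Prop :=
  S X /\ forall Y, S Y -> g X <= g Y.

Definition opt_value (g : 'M[R]_(n, r) -> R) (S : set 'M[R]_(n, r)) : R :=
  inf [set g X | X in S].

Definition min_nonzero_entry (X : 'M[R]_(n, r)) : R :=
  inf [set x | exists i j, X i j != 0 /\ x = X i j].

Definition no_zero_rows (X : 'M[R]_(n, r)) : Prop :=
  forall i : 'I_n, exists j : 'I_r, X i j != 0.

End Defs.

Arguments Stiefel R n r : clear implicits.
Arguments Rplus R n r : clear implicits.
Arguments Splus R n r : clear implicits.

From HB Require Import structures.
From mathcomp Require Import all_boot all_order all_algebra.
From mathcomp Require Import all_classical all_reals all_analysis.
From mathcomp Require Import ring lra.
Import Order.TTheory GRing.Theory Num.Theory.
Import numFieldNormedType.Exports.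
Local Open Scope classical_set_scope.
Local Open Scope ring_scope.

Set Implicit Arguments.
Unset Strict Implicit.
Unset Printing Implicit Defensive.

(* Let X* be a point of S_+ without zero rows: its columns are nonnegative and
   orthogonal, hence have disjoint supports, so each row of X* has exactly one
   positive entry. A Stiefel matrix X close to X* is rounded to S_+ by keeping
   its positive part on this support pattern, dropping the other entries and
   renormalizing the columns. The rounding error is of the order of vartheta(X)
   plus the mass of X off the pattern, and orthonormality of the columns of X
   bounds that mass by a multiple of vartheta(X). When r = 1 the single column
   is the pattern and there is no off-pattern mass, zero rows or not; when
   n = r, points of S_+ have no zero rows. The resulting local error bound
   dist(X, S_+) <= K vartheta(X), with the Lipschitz bound on f, gives
   f(X) - f* + K L_f vartheta(X) >= 0 near every minimizer, and compactness of
   St(n, r) merges these local estimates into one exact penalty constant. *)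

Section RealFacts.
Variable R : realType.

Lemma sumr_sqr_le_sqr_sum (I : finType) (F : I -> R) :
  (forall i, 0 <= F i) -> \sum_i F i ^+ 2 <= (\sum_i F i) ^+ 2.
Proof.
move=> F0; rewrite expr2 mulr_suml; apply: ler_sum => i _.
rewrite expr2; apply: ler_wpM2l => //.
by rewrite (bigD1 i) //= lerDl sumr_ge0.
Qed.

Lemma pos_neg_parts (x : R) :
  [/\ 0 <= Num.max x 0, 0 <= Num.max 0 (- x), x = Num.max x 0 - Num.max 0 (- x),
      `|x| = Num.max x 0 + Num.max 0 (- x) & Num.max x 0 * Num.max 0 (- x) = 0].
Proof.
rewrite /Num.Def.maxr oppr_gt0; have [h|h] := ltrP x 0.
  by split; [lra|lra|lra|rewrite ltr0_norm //; lra|lra].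
by split; [lra|lra|lra|rewrite ger0_norm //; lra|lra].
Qed.

Lemma negpart_le_dist (x a : R) : 0 <= a -> Num.max 0 (- x) <= `|x - a|.
Proof.
move=> a0; rewrite /Num.Def.maxr; case: ifP => _; last exact: normr_ge0.
by rewrite -normrN opprB; apply: le_trans (ler_norm _); lra.
Qed.

Lemma eq_of_dist_lt (x y : R) : (forall e, 0 < e -> `|x - y| < e) -> x = y.
Proof.
move=> h; apply/eqP; apply: contraT => hxy.
by have := h `|x - y|; rewrite normr_gt0 subr_eq0 hxy ltxx; apply.
Qed.

Lemma ler_add_scaled_gt0 (x y c : R) :
  0 <= c -> (forall e, 0 < e -> x <= y + c * e) -> x <= y.
Proof.
move=> c_ge0 x_le; apply/ler_addgt0Pr => e e_gt0.
have e'_gt0 : 0 < e / (c + 1) by rewrite divr_gt0 //; lra.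
apply: le_trans (x_le _ e'_gt0) _; rewrite lerD2l mulrA ler_pdivrMr; last by lra.
nra.
Qed.

End RealFacts.

Section StiefelFacts.
Variables (R : realType) (n r : nat).
Local Notation St := (Stiefel R n r).
Implicit Types (A X Y : 'M[R]_(n, r)).

Lemma frob_ge0 A : 0 <= frob A.
Proof. exact: sqrtr_ge0. Qed.

Lemma frob_le_sum_abs A : frob A <= \sum_i \sum_j `|A i j|.
Proof.
rewrite /frob -(@ger0_norm _ (\sum_i \sum_j `|A i j|)); last first.
  by apply: sumr_ge0 => i _; apply: sumr_ge0.
rewrite -sqrtr_sqr; apply: ler_wsqrtr.
apply: le_trans (sumr_sqr_le_sqr_sum _); last by move=> i; apply: sumr_ge0.
apply: ler_sum => i _; apply: le_trans (sumr_sqr_le_sqr_sum _) => //.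
by apply: ler_sum => j _; rewrite real_normK // num_real.
Qed.

Lemma entry_le_frob A i j : `|A i j| <= frob A.
Proof.
rewrite /frob -sqrtr_sqr; apply: ler_wsqrtr.
rewrite (bigD1 i) //= (bigD1 j) //= -addrA lerDl.
by apply: addr_ge0; do ?[apply: sumr_ge0 => ? _]; rewrite sqr_ge0.
Qed.

Lemma frobN A : frob (- A) = frob A.
Proof. by rewrite /frob; congr Num.sqrt; do 2 apply: eq_bigr => ? _; rewrite mxE sqrrN. Qed.

Lemma frob_subC X Y : frob (X - Y) = frob (Y - X).
Proof. by rewrite -frobN opprB. Qed.

Lemma entry_dist_le_frob X Y i j : `|X i j - Y i j| <= frob (X - Y).
Proof. by have := entry_le_frob (X - Y) i j; rewrite !mxE. Qed.

Lemma frob_le_entrywise A (e : R) :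
  (forall i j, `|A i j| <= e) -> frob A <= (n * r)%:R * e.
Proof.
move=> Ae; apply: le_trans (frob_le_sum_abs A) _.
apply: le_trans (_ : \sum_(i < n) \sum_(j < r) e <= _).
  by apply: ler_sum => i _; apply: ler_sum.
by rewrite !sumr_const !card_ord -mulrnA mulnC mulr_natl.
Qed.

Lemma trmx_mul_entry X j k : (X^T *m X) j k = \sum_i X i j * X i k.
Proof. by rewrite mxE; apply: eq_bigr => i _; rewrite mxE. Qed.

Lemma Stiefel_dot X j k : St X -> \sum_i X i j * X i k = (j == k)%:R.
Proof. by move=> StX; rewrite -trmx_mul_entry StX mxE. Qed.

Lemma Stiefel_col_norm X j : St X -> \sum_i X i j ^+ 2 = 1.
Proof.
move=> StX; have := Stiefel_dot j j StX; rewrite eqxx mulr1n => <-.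
by apply: eq_bigr => i _; rewrite expr2.
Qed.

Lemma Stiefel_entry_le1 X i j : St X -> `|X i j| <= 1.
Proof.
move=> StX; rewrite -(expr_le1 (n := 2)) // real_normK ?num_real //.
rewrite -(Stiefel_col_norm j StX) (bigD1 i) //= lerDl.
by apply: sumr_ge0 => k _; apply: sqr_ge0.
Qed.

Lemma StiefelN X : St X -> St (- X).
Proof.
move=> StX; apply/matrixP => j k; rewrite trmx_mul_entry mxE -(Stiefel_dot j k StX).
by apply: eq_bigr => i _; rewrite !mxE mulrNN.
Qed.

Lemma Splus_pid_mx : (r <= n)%N -> Splus R n r (pid_mx r).
Proof.
move=> rn; split; first by move=> i j; rewrite mxE ler0n.
by rewrite /Stiefel /= tr_pid_mx pid_mx_id // pid_mx_1.
Qed.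

Lemma Stiefel_row_sums_sqr X :
  St X -> \sum_i (\sum_k X i k) ^+ 2 = \sum_i \sum_k X i k ^+ 2.
Proof.
move=> StX.
have -> : \sum_i (\sum_k X i k) ^+ 2 = \sum_k \sum_l \sum_i X i k * X i l.
  under eq_bigr do rewrite expr2 mulr_suml; under eq_bigr do under eq_bigr do rewrite mulr_sumr.
  by rewrite exchange_big; apply: eq_bigr => k _; rewrite exchange_big.
rewrite [RHS]exchange_big; apply: eq_bigr => k _.
rewrite (eq_bigr (fun l => (k == l)%:R)); last by move=> l _; apply: Stiefel_dot.
rewrite (bigD1 k) //= eqxx big1 ?addr0 ?(Stiefel_col_norm k StX) //.
by move=> l; rewrite eq_sym => /negbTE ->.
Qed.

Lemma Stiefel_square_no_zero_rows X : n = r -> St X -> no_zero_rows X.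
Proof.
move=> nr; subst r => StX i; apply: contrapT => zero_row.
have /matrixP/(_ i i) := mulmx1C StX; rewrite !mxE eqxx big1 => [/eqP|j _].
  by rewrite eq_sym oner_eq0.
by rewrite mxE; have /negP/negPn/eqP -> := fun h => zero_row (ex_intro _ j h); rewrite mul0r.
Qed.

Lemma vartheta_ge0 X : 0 <= vartheta X.
Proof.
by apply: sumr_ge0 => i _; apply: sumr_ge0 => k _; have [] := pos_neg_parts (X i k).
Qed.

Lemma negpart_le_vartheta X i j : Num.max 0 (- X i j) <= vartheta X.
Proof.
rewrite /vartheta (bigD1 i) //= (bigD1 j) //= -addrA lerDl.
apply: addr_ge0; first by apply: sumr_ge0 => l _; have [] := pos_neg_parts (X i l).
by apply: sumr_ge0 => k _; apply: sumr_ge0 => l _; have [] := pos_neg_parts (X k l).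
Qed.

Lemma vartheta_eq0 X : vartheta X = 0 <-> Rplus R n r X.
Proof.
split=> [X0 i j|Xge0].
  by have := negpart_le_vartheta X i j; rewrite X0; have [] := pos_neg_parts (X i j); lra.
by apply: big1 => i _; apply: big1 => j _; rewrite /Num.Def.maxr oppr_gt0 ltNge Xge0.
Qed.

Lemma dist_le_frob (S : set 'M[R]_(n, r)) X Y : S Y -> dist X S <= frob (X - Y).
Proof. by move=> SY; apply: ge_inf; [exists 0 => _ [Z _ <-]; apply: frob_ge0 | exists Y]. Qed.

Lemma dist_Rplus_le_vartheta X : dist X (Rplus R n r) <= vartheta X.
Proof.
pose Xp := \matrix_(i, j) Num.max (X i j) 0.
have Xp_ge0 : Rplus R n r Xp by move=> i j; rewrite mxE; have [] := pos_neg_parts (X i j).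
apply: le_trans (dist_le_frob X Xp_ge0) _.
apply: le_trans (frob_le_sum_abs _) _; apply: ler_sum => i _; apply: ler_sum => j _.
rewrite !mxE; have [_ m_ge0 Xij _ _] := pos_neg_parts (X i j).
by rewrite {1}Xij addrAC subrr add0r normrN ger0_norm.
Qed.

Lemma Stiefel_closed X :
  (forall e, 0 < e -> exists2 Y, St Y & frob (X - Y) < e) -> St X.
Proof.
move=> near_St.
have X_le1 i j : `|X i j| <= 1.
  apply/ler_addgt0Pr => e e0; have [Y StY XY] := near_St e e0.
  have := entry_dist_le_frob X Y i j; have := Stiefel_entry_le1 i j StY.
  have := ler_normD (X i j - Y i j) (Y i j); rewrite subrK; lra.
have n_ge0 : 0 <= n%:R :> R by [].
apply/matrixP => j l; rewrite trmx_mul_entry mxE; apply: eq_of_dist_lt => e e0.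
pose e' := e / (2 * n%:R + 1).
have e'E : e' * (2 * n%:R + 1) = e by rewrite mulfVK //; apply: lt0r_neq0; lra.
have e'0 : 0 < e' by rewrite divr_gt0 //; lra.
have [Y StY XY] := near_St e' e'0.
rewrite -(Stiefel_dot j l StY) -sumrB; apply: le_lt_trans (ler_norm_sum _ _ _) _.
apply: (@le_lt_trans _ _ (\sum_(i < n) 2 * e')); last first.
  by rewrite sumr_const card_ord -mulr_natl; lra.
apply: ler_sum => i _.
have XYij := le_lt_trans (entry_dist_le_frob X Y i j) XY.
have XYil := le_lt_trans (entry_dist_le_frob X Y i l) XY.
have := X_le1 i j; have := Stiefel_entry_le1 i l StY.
rewrite (_ : _ - _ = X i j * (X i l - Y i l) + Y i l * (X i j - Y i j)); last by ring.
move=> Yil Xij; apply: le_trans (ler_normD _ _) _; rewrite !normrM.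
have := normr_ge0 (X i l - Y i l); have := normr_ge0 (X i j - Y i j).
have := normr_ge0 (X i j); have := normr_ge0 (Y i l); nra.
Qed.

Lemma Rplus_closed X :
  (forall e, 0 < e -> exists2 Y, frob (X - Y) < e & vartheta Y < e) -> Rplus R n r X.
Proof.
move=> near_Rplus i j; rewrite leNgt; apply/negP => Xij_lt0.
have [|Y XY thY] := near_Rplus (- X i j / 2); first lra.
have /ltr_normlP[? ?] := le_lt_trans (entry_dist_le_frob X Y i j) XY.
have := negpart_le_vartheta Y i j; have [? _ Yij _ _] := pos_neg_parts (Y i j).
lra.
Qed.

End StiefelFacts.

Section PatternRounding.
Variables (R : realType) (n r : nat) (X : 'M[R]_(n, r)) (c : 'I_n -> 'I_r).
Hypothesis StX : Stiefel R n r X.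

(* Distance from [X i k] to the values the pattern allows there: [0, +oo) in
   column [c i], {0} elsewhere. *)
Definition pattern_gap i k : R :=
  if k == c i then Num.max 0 (- X i k) else `|X i k|.

Definition pattern_part i k : R := if k == c i then Num.max (X i k) 0 else 0.

Definition pattern_scale k : R := Num.sqrt (\sum_i pattern_part i k ^+ 2).

Definition pattern_rounding : 'M[R]_(n, r) :=
  \matrix_(i, k) (pattern_part i k / pattern_scale k).

Local Notation defect k := (\sum_i pattern_gap i k ^+ 2).

Lemma pattern_gap_ge0 i k : 0 <= pattern_gap i k.
Proof. by rewrite /pattern_gap; case: ifP => _ //; have [] := pos_neg_parts (X i k). Qed.

Lemma pattern_part_ge0 i k : 0 <= pattern_part i k.
Proof. by rewrite /pattern_part; case: ifP => _ //; have [] := pos_neg_parts (X i k). Qed.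

Lemma pattern_split_sqr i k : pattern_part i k ^+ 2 + pattern_gap i k ^+ 2 = X i k ^+ 2.
Proof.
rewrite /pattern_part /pattern_gap; case: ifP => _; last first.
  by rewrite expr2 mul0r add0r real_normK ?num_real.
have [_ _ Xik _ pm0] := pos_neg_parts (X i k).
by rewrite [in RHS]Xik sqrrB pm0 mul0rn subr0.
Qed.

Lemma pattern_scale_sqr k : pattern_scale k ^+ 2 = 1 - defect k.
Proof.
rewrite sqr_sqrtr; last by apply: sumr_ge0 => i _; apply: sqr_ge0.
apply/eqP; rewrite eq_sym subr_eq -big_split -(Stiefel_col_norm k StX) /=.
by apply/eqP/eq_bigr => i _; rewrite pattern_split_sqr.
Qed.

Lemma pattern_rounding_Splus :
  (forall k, 0 < pattern_scale k) -> Splus R n r pattern_rounding.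
Proof.
move=> scale_gt0; split=> [i k|].
  by rewrite mxE divr_ge0 ?pattern_part_ge0 ?ltW.
apply/matrixP => j l; rewrite trmx_mul_entry mxE.
have [<-|jl] := eqVneq j l.
  rewrite mulr1n; under eq_bigr do rewrite !mxE -expr2 expr_div_n.
  rewrite -mulr_suml -[\sum_i _]sqr_sqrtr; last by apply: sumr_ge0 => i _; apply: sqr_ge0.
  exact: divff (lt0r_neq0 (exprn_gt0 2 (scale_gt0 j))).
apply: big1 => i _; rewrite !mxE /pattern_part.
case: eqP => [jc|_]; last by rewrite !mul0r.
by rewrite -jc eq_sym (negbTE jl) mul0r mulr0.
Qed.

Lemma pattern_rounding_entry i k : defect k <= 3/4 ->
  `|X i k - pattern_rounding i k| <= pattern_gap i k + 2 * defect k.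
Proof.
move=> defect_small; have defect_ge0 : 0 <= defect k.
  by apply: sumr_ge0 => l _; apply: sqr_ge0.
rewrite mxE /pattern_part /pattern_gap; case: ifP => _; last by rewrite mul0r subr0 lerDl; lra.
have [p_ge0 m_ge0 Xik Xabs _] := pos_neg_parts (X i k).
have := Stiefel_entry_le1 i k StX; rewrite Xabs => p_le1.
have s_sqr := pattern_scale_sqr k; rewrite expr2 in s_sqr.
set s := pattern_scale k in s_sqr *.
have s_ge0 : 0 <= s := sqrtr_ge0 _.
have s_ge12 : 1/2 <= s by nra.
have ts : s^-1 * s = 1 by rewrite mulVf //; lra.
have t_ge1 : 1 <= s^-1 by rewrite invr_ge1 ?unitfE; [nra | lra | nra].
have t_defect : (s^-1 - 1) * (1 + s) * s = defect k.
  have -> : defect k = 1 - s * s by lra.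
  by field; apply: lt0r_neq0; lra.
have t_le : s^-1 - 1 <= 2 * defect k.
  have : 0 <= (s^-1 - 1) * (2 * s * (1 + s) - 1) by apply: mulr_ge0; nra.
  nra.
have : 0 <= Num.max (X i k) 0 * (s^-1 - 1) <= s^-1 - 1.
  by apply/andP; split; [apply: mulr_ge0 | apply: ler_piMl]; lra.
by move=> /andP[? ?]; apply/ler_normlP; split; nra.
Qed.

Lemma pattern_rounding_err (d : R) :
  0 <= d -> n%:R * d <= 1/20 -> (forall i k, pattern_gap i k <= d) ->
  Splus R n r pattern_rounding /\
  frob (X - pattern_rounding) <= 11/10 * \sum_i \sum_k pattern_gap i k.
Proof.
move=> d_ge0 nd_small gap_le.
set G := \sum_i \sum_k _.
have G_ge0 : 0 <= G by do 2 apply: sumr_ge0 => ? _; apply: pattern_gap_ge0.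
have defect_le k : defect k <= d * \sum_i pattern_gap i k.
  rewrite mulr_sumr; apply: ler_sum => i _; rewrite expr2.
  by apply: ler_wpM2r; [apply: pattern_gap_ge0 | apply: gap_le].
have defect_small k : defect k <= 1/400.
  apply: le_trans (sumr_sqr_le_sqr_sum (pattern_gap_ge0 ^~ k)) _.
  have : \sum_i pattern_gap i k <= n%:R * d.
    apply: le_trans (ler_sum _ (fun i _ => gap_le i k)) _.
    by rewrite sumr_const card_ord mulr_natl.
  have : 0 <= \sum_i pattern_gap i k by apply: sumr_ge0 => i _; apply: pattern_gap_ge0.
  rewrite expr2; nra.
split.
  apply: pattern_rounding_Splus => k; have := pattern_scale_sqr k.
  have := defect_small k; have : 0 <= pattern_scale k := sqrtr_ge0 _.
  rewrite expr2; nra.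
apply: le_trans (frob_le_sum_abs _) _.
apply: le_trans (_ : \sum_i \sum_k (pattern_gap i k + 2 * defect k) <= _).
  apply: ler_sum => i _; apply: ler_sum => k _.
  have defect_le34 : defect k <= 3/4 by apply: le_trans (defect_small k) _; lra.
  by have := pattern_rounding_entry i defect_le34; rewrite !mxE.
rewrite (eq_bigr (fun i => \sum_k pattern_gap i k + 2 * \sum_k defect k)); last first.
  by move=> i _; rewrite big_split mulr_sumr.
rewrite big_split sumr_const card_ord /= -/G -mulr_natl.
have : \sum_k defect k <= d * G.
  rewrite /G [in X in _ <= X]exchange_big mulr_sumr.
  by apply: ler_sum => k _; apply: defect_le.
have : 0 <= n%:R :> R by [].
nra.
Qed.

Definition off_pattern_mass : R := \sum_i \sum_(k | k != c i) `|X i k|.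

Lemma sum_pattern_gap_le :
  \sum_i \sum_k pattern_gap i k <= vartheta X + off_pattern_mass.
Proof.
rewrite /vartheta /off_pattern_mass -big_split /=; apply: ler_sum => i _.
rewrite (bigD1 (c i)) //= /pattern_gap eqxx.
rewrite (eq_bigr (fun k => `|X i k|)); last by move=> k /negbTE ->.
rewrite lerD2r (bigD1 (c i)) //= lerDl.
by apply: sumr_ge0 => k _; have [] := pos_neg_parts (X i k).
Qed.

Lemma off_pattern_mass_le (m d : R) :
  0 <= d -> d <= m / 20 ->
  (forall i k, k != c i -> `|X i k| <= d) -> (forall i, m - d <= X i (c i)) ->
  m * off_pattern_mass <= 22/10 * vartheta X.
Proof.
move=> d_ge0 dm off_le diag_ge.
pose a i : R := X i (c i).
pose o i : R := \sum_(k | k != c i) X i k.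
pose Q i : R := \sum_(k | k != c i) `|X i k|.
pose N i : R := \sum_(k | k != c i) Num.max 0 (- X i k).
have Q_ge0 i : 0 <= Q i by apply: sumr_ge0.
have N_ge0 i : 0 <= N i by apply: sumr_ge0 => k _; have [] := pos_neg_parts (X i k).
have QE i : Q i = o i + 2 * N i.
  rewrite mulr_sumr -big_split /=; apply: eq_bigr => k _.
  by have [_ _ Xik Xabs _] := pos_neg_parts (X i k); lra.
(* Orthonormal columns give \sum_i (a i + o i)^2 = \sum_i (a i^2 + off-pattern
   squares), so the cross terms [a i * o i] are quadratically small. *)
have cross_le : 2 * \sum_i a i * o i <= d * \sum_i Q i.
  have rows := Stiefel_row_sums_sqr StX.
  rewrite (eq_bigr (fun i => (a i + o i) ^+ 2)) in rows; last first.
    by move=> i _; rewrite (bigD1 (c i)).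
  rewrite [RHS](eq_bigr (fun i => a i ^+ 2 + \sum_(k | k != c i) X i k ^+ 2)) in rows;
    last by move=> i _; rewrite (bigD1 (c i)).
  have off_sqr : \sum_i \sum_(k | k != c i) X i k ^+ 2 <= d * \sum_i Q i.
    rewrite mulr_sumr; apply: ler_sum => i _; rewrite mulr_sumr; apply: ler_sum => k ki.
    rewrite -real_normK ?num_real // expr2.
    by apply: ler_wpM2r; [exact: normr_ge0 | exact: off_le].
  have o_sqr : 0 <= \sum_i o i ^+ 2 by apply: sumr_ge0 => i _; apply: sqr_ge0.
  move: rows; rewrite big_split /= (eq_bigr (fun i => a i ^+ 2 + (2 * (a i * o i) + o i ^+ 2))).
    by rewrite big_split /= big_split /= -mulr_sumr; lra.
  by move=> i _; ring.
have aQ_le : \sum_i a i * Q i <= \sum_i a i * o i + 2 * vartheta X.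
  apply: le_trans (_ : _ <= \sum_i a i * o i + 2 * \sum_i N i) _.
    rewrite mulr_sumr -big_split /=; apply: ler_sum => i _; rewrite QE.
    have := Stiefel_entry_le1 i (c i) StX; rewrite /a => /ler_normlP[_ ?].
    by have := N_ge0 i; nra.
  rewrite lerD2l ler_pM2l // /vartheta; apply: ler_sum => i _.
  by rewrite (bigD1 (c i)) //= lerDr; have [] := pos_neg_parts (X i (c i)).
have Q_le_aQ : (m - d) * \sum_i Q i <= \sum_i a i * Q i.
  by rewrite mulr_sumr; apply: ler_sum => i _; apply: ler_wpM2r; [apply: Q_ge0 | apply: diag_ge].
have : 0 <= \sum_i Q i by apply: sumr_ge0.
rewrite /off_pattern_mass -/Q; nra.
Qed.

End PatternRounding.

Section LocalErrorBounds.
Variables (R : realType) (n r : nat).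
Local Notation St := (Stiefel R n r).
Local Notation Sp := (Splus R n r).
Implicit Types (X Y Xs : 'M[R]_(n, r)).

Definition local_error_bound Xs := exists2 d : R, 0 < d & exists K : R,
  forall X, St X -> frob (X - Xs) <= d -> exists2 Y, Sp Y & frob (X - Y) <= K * vartheta X.

Lemma Splus_row_pattern Xs : Sp Xs -> no_zero_rows Xs ->
  exists c : 'I_n -> 'I_r,
    (forall i k, k != c i -> Xs i k = 0) /\ (forall i, 0 < Xs i (c i)).
Proof.
move=> [Xs_ge0 StXs] /choice[c Xs_c]; exists c; split=> [i k kc|i]; last first.
  by rewrite lt0r Xs_c Xs_ge0.
have dot0 := Stiefel_dot k (c i) StXs; rewrite (negbTE kc) in dot0.
have /eqP := psumr_eq0P (fun l _ => mulr_ge0 (Xs_ge0 l k) (Xs_ge0 l (c i))) dot0 (i := i) isT.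
by rewrite mulf_eq0 (negbTE (Xs_c i)) orbF => /eqP.
Qed.

Lemma min_nonzero_entry_pattern Xs (c : 'I_n -> 'I_r) :
  (forall i k, 0 <= Xs i k) -> (forall i k, k != c i -> Xs i k = 0) ->
  (forall i, 0 < Xs i (c i)) -> (0 < n)%N ->
  0 < min_nonzero_entry Xs /\ forall i, min_nonzero_entry Xs <= Xs i (c i).
Proof.
move=> Xs_ge0 Xs_off Xs_c n_gt0.
have entry_c x : (exists i j, Xs i j != 0 /\ x = Xs i j) -> exists i, x = Xs i (c i).
  move=> [i [j [Xs_ij ->]]]; exists i; have [-> //|jc] := eqVneq j (c i).
  by move: Xs_ij; rewrite Xs_off ?eqxx.
split=> [|i]; last first.
  apply: ge_inf; last by exists i, (c i); rewrite lt0r_neq0.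
  by exists 0 => _ /entry_c[j ->]; apply: Xs_ge0.
pose i0 : 'I_n := Ordinal n_gt0.
apply: lt_le_trans (_ : 0 < \big[Num.min/1]_i Xs i (c i)) _.
  by apply/bigmin_gtP; split=> // i _.
apply: lb_le_inf; first by exists (Xs i0 (c i0)), i0, (c i0); rewrite lt0r_neq0.
by move=> _ /entry_c[i ->]; apply: bigmin_le.
Qed.

Lemma local_error_bound_no_zero_rows Xs : (0 < n)%N -> Sp Xs -> no_zero_rows Xs ->
  0 < min_nonzero_entry Xs /\
  exists2 d, 0 < d & forall X, St X -> frob (X - Xs) <= d ->
    exists2 Y, Sp Y & min_nonzero_entry Xs * frob (X - Y) <= 4 * vartheta X.
Proof.
move=> n_gt0 SpXs /(Splus_row_pattern SpXs)[c [Xs_off Xs_c]].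
have [m_gt0 m_le] := min_nonzero_entry_pattern SpXs.1 Xs_off Xs_c n_gt0.
set m := min_nonzero_entry Xs in m_gt0 m_le *; split=> //.
have m_le1 : m <= 1.
  pose i0 : 'I_n := Ordinal n_gt0.
  by apply: le_trans (m_le i0) _; have /ler_normlP[] := Stiefel_entry_le1 i0 (c i0) SpXs.2.
have n_ge1 : 1 <= n%:R :> R by rewrite ler1n.
pose d := m / (20 * n%:R).
have dE : d * (20 * n%:R) = m by rewrite mulfVK //; apply: lt0r_neq0; lra.
have d_gt0 : 0 < d by rewrite divr_gt0 //; lra.
exists d => // X StX XXs.
have near i k : `|X i k - Xs i k| <= d := le_trans (entry_dist_le_frob X Xs i k) XXs.
have [|||SpY XY] := @pattern_rounding_err _ _ _ X c StX d; [lra | nra | |].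
  move=> i k; rewrite /pattern_gap; case: ifP => [_ | /negbT kc].
    exact: le_trans (negpart_le_dist _ (SpXs.1 i k)) (near i k).
  by have := near i k; rewrite Xs_off // subr0.
exists (pattern_rounding X c) => //.
have Q_le : m * off_pattern_mass X c <= 22/10 * vartheta X.
  apply: (off_pattern_mass_le StX (d := d)); [lra | nra | | ].
    by move=> i k kc; have := near i k; rewrite Xs_off // subr0.
  by move=> i; have := near i (c i); have := m_le i => ? /ler_normlP[? ?]; lra.
have := sum_pattern_gap_le X c; have := vartheta_ge0 X.
have := frob_ge0 (X - pattern_rounding X c); nra.
Qed.

Lemma no_zero_rows_local_error_bound Xs :
  (0 < n)%N -> Sp Xs -> no_zero_rows Xs -> local_error_bound Xs.
Proof.
move=> n_gt0 SpXs /(local_error_bound_no_zero_rows n_gt0 SpXs)[m_gt0 [d d_gt0 Xs_local]].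
exists d => //; exists (4 / min_nonzero_entry Xs) => X StX XXs.
have [Y SpY XY] := Xs_local X StX XXs; exists Y => //.
by rewrite mulrAC ler_pdivlMr // mulrC.
Qed.

Lemma local_error_bound_column Xs : (0 < n)%N -> r = 1%N -> Sp Xs -> local_error_bound Xs.
Proof.
move=> n_gt0 r1 SpXs.
have r_gt0 : (0 < r)%N by rewrite r1.
pose c (i : 'I_n) : 'I_r := Ordinal r_gt0.
have in_pattern i k : k = c i.
  apply: val_inj; have : (val k < 1)%N by rewrite -r1 ltn_ord.
  by rewrite ltnS leqn0 => /eqP.
have n_ge1 : 1 <= n%:R :> R by rewrite ler1n.
pose d : R := (20 * n%:R)^-1.
have d_gt0 : 0 < d by rewrite invr_gt0; lra.
have dE : d * (20 * n%:R) = 1 by rewrite mulVf //; apply: lt0r_neq0; lra.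
exists d => //; exists (11/10) => X StX XXs.
have [|||SpY XY] := @pattern_rounding_err _ _ _ X c StX d; [lra | lra | |].
  move=> i k; rewrite /pattern_gap -(in_pattern i k) eqxx.
  exact: le_trans (negpart_le_dist _ (SpXs.1 i k)) (le_trans (entry_dist_le_frob X Xs i k) XXs).
exists (pattern_rounding X c) => //; apply: le_trans XY _; rewrite ler_pM2l //.
have no_off : off_pattern_mass X c = 0.
  by apply: big1 => i _; apply: big_pred0 => k; rewrite -(in_pattern i k) eqxx.
by have := sum_pattern_gap_le X c; rewrite no_off addr0.
Qed.

Lemma Splus_local_error_bound Xs : (0 < r)%N -> (r <= n)%N -> Sp Xs ->
  ((r < n)%N -> (1 < r)%N -> no_zero_rows Xs) -> local_error_bound Xs.
Proof.
move=> r_gt0 r_le_n SpXs nzr; have n_gt0 := leq_trans r_gt0 r_le_n.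
have [r1|r_neq1] := eqVneq r 1%N; first exact: local_error_bound_column.
apply: no_zero_rows_local_error_bound => //.
have [r_lt_n|n_le_r] := ltnP r n; first by apply: nzr; rewrite // ltn_neqAle eq_sym r_neq1.
by apply: Stiefel_square_no_zero_rows SpXs.2; apply/eqP; rewrite eqn_leq n_le_r.
Qed.

End LocalErrorBounds.

Lemma four_le_kappa_factor (R : realType) (n r : nat) : (1 < r)%N -> (r < n)%N ->
  4 <= 21 / 10 * Num.sqrt r%:R * (1 + 3 * r%:R * (n - r)%:R) :> R.
Proof.
move=> r_gt1 r_lt_n.
have sqrt_r : 1 <= Num.sqrt r%:R :> R.
  by rewrite -[X in X <= _]sqrtr1; apply: ler_wsqrtr; rewrite ler1n ltnW.
have : 7 <= 1 + 3 * r%:R * (n - r)%:R :> R.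
  have : 2 <= r%:R :> R by rewrite ler_nat.
  have : 1 <= (n - r)%:R :> R by rewrite ler1n subn_gt0.
  nra.
nra.
Qed.

Section Compactness.
Variable R : realType.

Lemma bounded_rV_seq_cluster (p : nat) (v : nat -> 'rV[R]_p) :
  (forall k i, `|v k 0 i| <= 1) ->
  exists w : 'rV[R]_p, forall e, 0 < e -> forall N,
    exists2 k, (N <= k)%N & forall i, `|w 0 i - v k 0 i| < e.
Proof.
move=> v_le1; pose cube := [set u : 'rV[R]_p | forall i, [set` `[(-1 : R), 1]] (u 0 i)].
have cube_compact : compact cube.
  by apply: (@rV_compact _ p (fun=> [set` `[(-1 : R), 1]])) => _; apply: segment_compact.
have v_cube : (v @ \oo) cube.
  apply: (@filterE nat \oo _ (fun k => forall i, [set` `[(-1 : R), 1]] (v k 0 i))) => k i.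
  have /ler_normlP[? ?] := v_le1 k i; rewrite /mkset in_itv /=.
  by apply/andP; split; rewrite // lerNl.
have [w [_ w_cluster]] := cube_compact _ _ v_cube.
exists w => e e_gt0 N.
have tail : (v @ \oo) [set u | exists2 k, (N <= k)%N & u = v k].
  by apply: filterS (nbhs_infty_ge N) => k Nk; exists k.
have ball_w : nbhs w (ball w e) by exact: nbhsx_ballx.
have [_ [[k Nk ->] w_ball]] := w_cluster _ _ tail ball_w.
by exists k => // i; move: w_ball => [_ /(_ 0 i)].
Qed.

Lemma Stiefel_seq_cluster n r (Xk : nat -> 'M[R]_(n, r)) :
  (forall k, Stiefel R n r (Xk k)) ->
  exists2 X, Stiefel R n r X &
    forall e, 0 < e -> forall N, exists2 k, (N <= k)%N & frob (Xk k - X) < e.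
Proof.
move=> StXk.
have [|w w_cluster] := @bounded_rV_seq_cluster _ (fun k => mxvec (Xk k)).
  by move=> k i; case/mxvec_indexP: i => a b; rewrite mxvecE; apply: Stiefel_entry_le1.
pose X := vec_mx w.
have X_cluster e : 0 < e -> forall N, exists2 k, (N <= k)%N & frob (Xk k - X) < e.
  move=> e_gt0 N; have nr_ge0 : 0 <= (n * r)%:R :> R by [].
  pose e' := e / ((n * r)%:R + 1).
  have e'E : e' * ((n * r)%:R + 1) = e by rewrite mulfVK //; apply: lt0r_neq0; lra.
  have e'_gt0 : 0 < e' by rewrite divr_gt0 //; lra.
  have [k Nk near_k] := w_cluster e' e'_gt0 N; exists k => //.
  apply: le_lt_trans (frob_le_entrywise (e := e') _) _; last first.
    by rewrite -e'E mulrDr mulr1 mulrC ltrDl.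
  move=> a b; rewrite !mxE distrC; have := near_k (mxvec_index a b).
  by rewrite mxvecE => /ltW.
exists X => //; apply: Stiefel_closed => e /X_cluster/(_ 0%N)[k _ XkX].
by exists (Xk k); last rewrite frob_subC.
Qed.

End Compactness.

Section ExactPenalty.
Variables (R : realType) (n r : nat) (f : 'M[R]_(n, r) -> R) (Lf : R).
Hypotheses (r_gt0 : (0 < r)%N) (r_le_n : (r <= n)%N).
Hypothesis f_lip : forall X Y, Stiefel R n r X -> Stiefel R n r Y ->
  `|f X - f Y| <= Lf * frob (X - Y).
Local Notation St := (Stiefel R n r).
Local Notation Sp := (Splus R n r).
Local Notation fstar := (opt_value f Sp).
Implicit Types (X Y : 'M[R]_(n, r)).

Let X0 : 'M[R]_(n, r) := pid_mx r.
Let SpX0 : Sp X0 := Splus_pid_mx R r_le_n.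
Let B := 2 * (n * r)%:R * Lf.

Lemma lipschitz_const_ge0 : 0 <= Lf.
Proof.
pose i0 : 'I_r := Ordinal r_gt0.
have gap_pos : 0 < frob (X0 - - X0).
  apply: lt_le_trans (entry_le_frob _ (widen_ord r_le_n i0) i0).
  by rewrite !mxE /= r_gt0 opprK normr_gt0 -mulr2n pnatr_eq0.
rewrite -(pmulr_lge0 _ gap_pos).
exact: le_trans (normr_ge0 _) (f_lip SpX0.2 (StiefelN SpX0.2)).
Qed.

Lemma lipschitz_osc X Y : St X -> St Y -> `|f X - f Y| <= B.
Proof.
move=> StX StY; apply: le_trans (f_lip StX StY) _.
rewrite /B [Lf * _]mulrC; apply: ler_wpM2r; first exact: lipschitz_const_ge0.
rewrite mulrC; apply: frob_le_entrywise => i j; rewrite !mxE; apply: le_trans (ler_normB _ _) _.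
by have := Stiefel_entry_le1 i j StX; have := Stiefel_entry_le1 i j StY; lra.
Qed.

Lemma opt_value_le Y : Sp Y -> fstar <= f Y.
Proof.
move=> SpY; apply: ge_inf; last by exists Y.
exists (f X0 - B) => _ [Z SpZ <-].
by have /ler_normlP[? ?] := lipschitz_osc SpX0.2 SpZ.2; lra.
Qed.

Lemma opt_value_lower X : St X -> fstar - B <= f X.
Proof.
move=> StX; have := opt_value_le SpX0.
by have /ler_normlP[? ?] := lipschitz_osc SpX0.2 StX; lra.
Qed.

Lemma global_minP X : global_min f Sp X <-> Sp X /\ f X <= fstar.
Proof.
split=> [[SpX X_min]|[SpX fX]]; split=> //.
  by apply: lb_le_inf; [exists (f X), X | move=> _ [Y SpY <-]; apply: X_min].
by move=> Y /opt_value_le; apply: le_trans.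
Qed.

Lemma near_Splus_lower X Y t : St X -> Sp Y -> frob (X - Y) <= t ->
  fstar - Lf * t <= f X.
Proof.
move=> StX SpY XY; have /ler_normlP[? ?] := f_lip StX SpY.2.
have := opt_value_le SpY; have := ler_wpM2l lipschitz_const_ge0 XY; lra.
Qed.

Lemma penalty_ge0_of_dist_bound X (K : R) :
  St X -> dist X Sp <= K * vartheta X -> 0 <= f X - fstar + K * Lf * vartheta X.
Proof.
move=> StX dist_le; suff : fstar - K * Lf * vartheta X <= f X by lra.
apply: (ler_add_scaled_gt0 lipschitz_const_ge0) => e e_gt0.
have [|_ [Y SpY <-] XY] := inf_adherent e_gt0 (E := [set frob (X - Y) | Y in Sp]).
  split; first by exists (frob (X - X0)), X0.
  by exists 0 => _ [Y _ <-]; apply: frob_ge0.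
have := near_Splus_lower (t := K * vartheta X + e) StX SpY.
rewrite /dist in dist_le; lra.
Qed.

Lemma violators_cluster_global_min (Xk : nat -> 'M[R]_(n, r)) X :
  (forall k, St (Xk k) /\ f (Xk k) < fstar - k%:R * vartheta (Xk k)) -> St X ->
  (forall e, 0 < e -> forall N, exists2 k, (N <= k)%N & frob (Xk k - X) < e) ->
  global_min f Sp X.
Proof.
move=> Xk_bad StX X_cluster; have Lf_ge0 := lipschitz_const_ge0.
have B_ge0 : 0 <= B by apply: le_trans (lipschitz_osc StX StX); apply: normr_ge0.
have k_ge0 (k : nat) : 0 <= k%:R :> R by [].
have vartheta_Xk k : k%:R * vartheta (Xk k) <= B.
  by have [StXk fXk] := Xk_bad k; have := opt_value_lower StXk; lra.
apply/global_minP; split; first split=> //.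
  apply: Rplus_closed => e e_gt0.
  have [k Nk XkX] := X_cluster e e_gt0 (Num.bound (B / e)).
  exists (Xk k); first by rewrite frob_subC.
  have kN : (Num.bound (B / e))%:R <= k%:R :> R by rewrite ler_nat.
  have Be : B / e < k%:R.
    by apply: lt_le_trans kN; apply: archi_boundP; apply: divr_ge0 => //; apply: ltW.
  have BeE : B / e * e = B by rewrite divfK // gt_eqF.
  by have := vartheta_Xk k; have := vartheta_ge0 (Xk k); have := k_ge0 k; nra.
apply: (ler_add_scaled_gt0 Lf_ge0) => e e_gt0.
have [k _ XkX] := X_cluster e e_gt0 0%N; rewrite frob_subC in XkX.
have [StXk fXk] := Xk_bad k; have /ler_normlP[_ ?] := f_lip StX StXk.
have := vartheta_ge0 (Xk k); have := k_ge0 k; have := ler_wpM2l Lf_ge0 (ltW XkX).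
nra.
Qed.

(* By contradiction: matrices [X_k] violating the bound with constant [k]
   cluster at a global minimizer, where the local error bound fails. *)
Lemma global_penalty_bound :
  (forall Xs, global_min f Sp Xs -> local_error_bound Xs) ->
  exists2 C, 0 <= C & forall X, St X -> fstar - C * vartheta X <= f X.
Proof.
move=> local_eb; apply: contrapT => no_bound.
have bad (k : nat) : exists X, St X /\ f X < fstar - k%:R * vartheta X.
  apply: contrapT => /forallNP good; apply: no_bound; exists k%:R => // X StX.
  by rewrite leNgt; apply/negP => fX; apply: (good X).
have [Xk Xk_bad] := choice bad.
have [X StX X_cluster] := Stiefel_seq_cluster (fun k => (Xk_bad k).1).
have X_min := violators_cluster_global_min Xk_bad StX X_cluster.
have [d d_gt0 [K XK]] := local_eb X X_min.
have [k Nk XkX] := X_cluster d d_gt0 (Num.bound `|Lf * K|).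
have [[StXk fXk] [Y SpY XkY]] := (Xk_bad k, XK (Xk k) (Xk_bad k).1 (ltW XkX)).
have := near_Splus_lower StXk SpY XkY.
have kN : (Num.bound `|Lf * K|)%:R <= k%:R :> R by rewrite ler_nat.
have := archi_boundP (normr_ge0 (Lf * K)); have := ler_norm (Lf * K).
by have := vartheta_ge0 (Xk k); nra.
Qed.

Lemma exact_penalty (C : R) :
  (forall X, St X -> fstar - C * vartheta X <= f X) ->
  forall rho, C < rho -> forall X,
  global_min (fun Y => f Y + rho * vartheta Y) St X <-> global_min f Sp X.
Proof.
move=> penalty_bound rho C_rho X; split=> [[StX X_min]|].
  have fX_pen : f X + rho * vartheta X <= fstar.
    apply: lb_le_inf; first by exists (f X0), X0.
    move=> _ [Y [RpY StY] <-]; have := X_min Y StY.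
    by rewrite (vartheta_eq0 Y).2 // mulr0 addr0.
  have thX : vartheta X = 0.
    by have := penalty_bound X StX; have := vartheta_ge0 X; nra.
  apply/global_minP; split; first by split=> //; apply/vartheta_eq0.
  by move: fX_pen; rewrite thX mulr0 addr0.
move=> /global_minP[[RpX StX] fX]; split=> // Y StY.
rewrite (vartheta_eq0 X).2 // mulr0 addr0.
by have := penalty_bound Y StY; have := vartheta_ge0 Y; nra.
Qed.

End ExactPenalty.

Theorem theorem3p6 (R : realType) (n r : nat)
  (O : set 'M[R]_(n, r)) (f : 'M[R]_(n, r) -> R) (Lf : R) :
  (1 <= r)%N -> (r <= n)%N ->
  open O -> Stiefel R n r `<=` O ->
  (* f is continuously differentiable on O *)
  (forall X, O X -> differentiable f X) ->
  (forall V : 'M[R]_(n, r), {within O, continuous ('D_V f)}) ->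
  (* Lf is a Lipschitz constant of f on St(n,r) *)
  (forall X Y, Stiefel R n r X -> Stiefel R n r Y ->
     `|f X - f Y| <= Lf * frob (X - Y)) ->
  (* in the case n > r > 1, global minimizers of (P) have no zero rows *)
  ((r < n)%N -> (1 < r)%N ->
     forall X, global_min f (Splus R n r) X -> no_zero_rows X) ->
  let fstar := opt_value f (Splus R n r) in
  (* 1. *)
  ((n = r \/ ((r < n)%N /\ r = 1%N)) ->
     forall kappa' : R, 0 < kappa' ->
     (forall Z, Stiefel R n r Z ->
        dist Z (Splus R n r) <= kappa' * dist Z (Rplus R n r)) ->
     forall X, Stiefel R n r X ->
       0 <= f X - fstar + kappa' * Lf * vartheta X)
  /\
  (* 2. *)
  ((r < n)%N -> (1 < r)%N ->
     forall Xs, global_min f (Splus R n r) Xs ->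
     let kappa := (21 / 10) * Num.sqrt (r%:R) * (1 + 3 * r%:R * (n - r)%:R)
                  / min_nonzero_entry Xs in
     exists delta : R, 0 < delta /\
       forall eps : R, 0 <= eps ->
       forall X, frob (X - Xs) <= delta ->
         Stiefel R n r X -> vartheta X = eps ->
         0 <= f X - fstar + kappa * Lf * vartheta X)
  /\
  (* consequence: exact penalty *)
  (exists rhobar : R, 0 < rhobar /\
     forall rho : R, rhobar <= rho ->
     forall X, global_min (fun Y => f Y + rho * vartheta Y) (Stiefel R n r) X
               <-> global_min f (Splus R n r) X).
Proof.
move=> r_gt0 r_le_n _ _ _ _ f_lip min_no_zero_rows fstar.
have n_gt0 : (0 < n)%N := leq_trans r_gt0 r_le_n.
have penalty_ge0 := penalty_ge0_of_dist_bound r_gt0 r_le_n f_lip.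
split; [|split].
- move=> _ kappa' kappa'_gt0 dist_le X StX; apply: penalty_ge0 => //.
  exact: le_trans (dist_le X StX) (ler_wpM2l (ltW kappa'_gt0) (dist_Rplus_le_vartheta X)).
- move=> r_lt_n r_gt1 Xs Xs_min kappa.
  have [m_gt0 [d d_gt0 Xs_local]] := local_error_bound_no_zero_rows n_gt0 Xs_min.1
    (min_no_zero_rows r_lt_n r_gt1 Xs Xs_min).
  exists d; split=> // _ _ X XXs StX _; apply: penalty_ge0 => //.
  have [Y SpY XY] := Xs_local X StX XXs; apply: le_trans (dist_le_frob _ SpY) _.
  have kappa_m : 4 <= kappa * min_nonzero_entry Xs.
    by rewrite /kappa mulfVK ?gt_eqF // four_le_kappa_factor.
  by rewrite -(ler_pM2l m_gt0); have := vartheta_ge0 X; nra.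
- have [C C_ge0 penalty_bound] := global_penalty_bound r_gt0 r_le_n f_lip
    (fun Xs Xs_min => Splus_local_error_bound r_gt0 r_le_n Xs_min.1
       (fun r_lt_n r_gt1 => min_no_zero_rows r_lt_n r_gt1 Xs Xs_min)).
  exists (C + 1); split=> [|rho rho_ge X]; first lra.
  by apply: (exact_penalty r_gt0 r_le_n f_lip penalty_bound); lra.
Qed.
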